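(* Let $R$ be a pmp equivalence relation on $(X,\mu)$ and $F\subseteq\llbracket R\rrbracket$ a finite subset. Then $s(F)\leq\operatorname{cost}(F)$, where $\operatorname{cost}(F)=\sum_{s\in F}\mu(\operatorname{dom}s)$.
   Context: Let $(X,\mu)$ be a standard probability space and $R$ a pmp countable Borel equivalence relation. $\llbracket R\rrbracket$ denotes the set of partial measure-preserving Borel bijections between Borel subsets of $X$ with graph contained in $R$, modulo null sets, with composition, inverses and identity $1$. Pairwise orthogonal elements (pairwise disjoint domains and ranges) have a sum; $\mathbf\Sigma F$ is the set of finite sums of pairwise orthogonal elements of $F$; $F_\pm=F\cup\{s^{-1}:s\in F\}\cup\{1\}$; $F_\pm^n$ the products of $n$ elements of $F_\pm$. $|s-t|=\mu\{x\in\operatorname{dom}s\cup\operatorname{dom}t:s(x)\neq t(x)\}$ (with $s(x)\neq t(x)$ on $\operatorname{dom}s\triangle\operatorname{dom}t$), $\tau(s)=\mu\{x\in\operatorname{dom}s:s(x)=x\}$. $\llbracket d\rrbracket$: partial permutations of $\{1,\dots,d\}$ with uniform measure, same distance, trace $\operatorname{tr}$. ${\rm SA}(F,n,\delta,d)$ is the set of maps $\varphi:\llbracket R\rrbracket\to\llbracket d\rrbracket$ with $\varphi(1)=1$ such that $|\varphi(st)-\varphi(s)\varphi(t)|<\delta$ for all $s,t\in\mathbf\Sigma F_\pm^n$ with $st\in\mathbf\Sigma F_\pm^n$, and $|\operatorname{tr}(\varphi(s))-\tau(s)|<\delta$ for all $s\in\mathbf\Sigma F_\pm^n$. ${\rm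 NSA}(F,n,\delta,d)$ is the number of distinct restrictions $\varphi|_F$, $\varphi\in{\rm SA}(F,n,\delta,d)$, and $s(F)=\inf_n\inf_{\delta>0}\limsup_{d\to\infty}\frac{1}{d\log d}\log{\rm NSA}(F,n,\delta,d)$ ($\log0=-\infty$). *)

From HB Require Import structures.
From mathcomp Require Import all_boot all_order all_algebra.
From mathcomp Require Import all_classical all_reals all_analysis.
Set Implicit Arguments. Unset Strict Implicit. Unset Printing Implicit Defensive.
Import Order.TTheory GRing.Theory Num.Theory.
Local Open Scope classical_set_scope.
Local Open Scope ring_scope.

Fixpoint inseq {A : Type} (x : A) (l : seq A) : Prop :=
  if l is b :: l' then x = b \/ inseq x l' else False.

Section Defs.
Context {dX : measure_display} {X : measurableType dX} {R : realType}.

(* Standard Borel space: Borel-isomorphic to a Borel subset of the real line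
   (Kuratowski). *)
Definition standard_borel : Prop :=
  exists (f : X -> R), measurable_fun setT f /\ injective f /\
    measurable (f @` setT) /\ (forall A, measurable A -> measurable (f @` A)).

Definition cber (Rel : X -> X -> Prop) : Prop :=
  [/\ (forall x, Rel x x), (forall x y, Rel x y -> Rel y x),
      (forall x y z, Rel x y -> Rel y z -> Rel x z),
      measurable [set p : X * X | Rel p.1 p.2] &
      (forall x, countable [set y | Rel x y])].

Definition borel_pbij (D : set X) (f g : X -> X) : Prop :=
  [/\ measurable D /\ measurable_fun D f, measurable (f @` D),
      measurable_fun (f @` D) g,
      (forall x, D x -> g (f x) = x) &
      (forall y, (f @` D) y -> f (g y) = y)].

Definition meas_pres (mu : {measure set X -> \bar R}) (D : set X) (f : X -> X) :=
  forall C, measurable C -> C `<=` D -> mu (f @` C) = mu C.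

Definition pmp (mu : {measure set X -> \bar R}) (Rel : X -> X -> Prop) : Prop :=
  forall D f g, borel_pbij D f g -> (forall x, D x -> Rel x (f x)) ->
    meas_pres mu D f.

(* representatives of elements of the full pseudogroup [[R]] *)
Record pfb (mu : {measure set X -> \bar R}) (Rel : X -> X -> Prop) := PFB {
  pdom : set X;
  pfun : X -> X;
  pinv : X -> X;
  pfb_bij : borel_pbij pdom pfun pinv;
  pfb_mp : meas_pres mu pdom pfun;
  pfb_graph : forall x, pdom x -> Rel x (pfun x) }.

Definition rawp := (set X * (X -> X))%type.
Definition rid : rawp := (setT, id).
Definition rcomp (s t : rawp) : rawp :=
  ([set x | t.1 x /\ s.1 (t.2 x)], s.2 \o t.2).
Definition rran (s : rawp) : set X := s.2 @` s.1.
Definition rsum (l : seq rawp) : rawp :=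
  (foldr (fun a A => a.1 `|` A) set0 l,
   foldr (fun a h x => if `[< a.1 x >] then a.2 x else h x) id l).

Variables (mu : {measure set X -> \bar R}) (Rel : X -> X -> Prop).
Local Notation T := (pfb mu Rel).

Definition raw (s : T) : rawp := (pdom s, pfun s).
Definition rinvT (s : T) : rawp := (pfun s @` pdom s, pinv s).

Definition diffset (a b : rawp) : set X :=
  [set x | (a.1 x \/ b.1 x) /\ ~ (a.1 x /\ b.1 x /\ a.2 x = b.2 x)].
Definition rdist (a b : rawp) : R := fine (mu (diffset a b)).
Definition rtau (a : rawp) : R := fine (mu [set x | a.1 x /\ a.2 x = x]).
Definition requiv (a b : rawp) : Prop := mu (diffset a b) = 0%E.
Definition rorth (a b : rawp) : Prop :=
  mu (a.1 `&` b.1) = 0%E /\ mu (rran a `&` rran b) = 0%E.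

Fixpoint orth_all (a : rawp) (l : seq rawp) : Prop :=
  if l is b :: l' then rorth a b /\ orth_all a l' else True.
Fixpoint pairwise_orth (l : seq rawp) : Prop :=
  if l is a :: l' then orth_all a l' /\ pairwise_orth l' else True.

(* the list F has pairwise inequivalent entries, i.e. represents a finite set
   of distinct classes of [[R]] *)
Fixpoint noneq_all (a : rawp) (l : seq rawp) : Prop :=
  if l is b :: l' then ~ requiv a b /\ noneq_all a l' else True.
Fixpoint pairwise_noneq (l : seq rawp) : Prop :=
  if l is a :: l' then noneq_all a l' /\ pairwise_noneq l' else True.

(* F_pm, F_pm^n, Sigma A (as sets of classes, i.e. closed under requiv) *)
Definition Fpm (F : seq T) (u : T) : Prop :=
  requiv (raw u) rid \/
  exists2 s, inseq s F & (requiv (raw u) (raw s) \/ requiv (raw u) (rinvT s)).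
Definition Fpmn (F : seq T) (n : nat) (u : T) : Prop :=
  exists l : seq T, [/\ size l = n, (forall s, inseq s l -> Fpm F s) &
    requiv (raw u) (foldr rcomp rid (map raw l))].
Definition Sigma (A : T -> Prop) (u : T) : Prop :=
  exists l : seq T, [/\ (forall s, inseq s l -> A s),
    pairwise_orth (map raw l) & requiv (raw u) (rsum (map raw l))].

Definition ppinj d (p : {ffun 'I_d -> option 'I_d}) : bool :=
  [forall i, forall j, (p i != None) ==> (p i == p j) ==> (i == j)].
Definition pperm d := {p : {ffun 'I_d -> option 'I_d} | ppinj p}.
Definition ppid d : {ffun 'I_d -> option 'I_d} := [ffun i => Some i].
Definition ppmul d (p q : {ffun 'I_d -> option 'I_d}) : {ffun 'I_d -> option 'I_d} :=
  [ffun i => obind p (q i)].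
Definition ppdist d (p q : {ffun 'I_d -> option 'I_d}) : R :=
  #|[set i | p i != q i]|%:R / d%:R.
Definition pptr d (p : {ffun 'I_d -> option 'I_d}) : R :=
  #|[set i | p i == Some i]|%:R / d%:R.

Definition SA (F : seq T) (n : nat) (delta : R) (d : nat) (phi : T -> pperm d) : Prop :=
  [/\ (forall s t : T, requiv (raw s) (raw t) -> phi s = phi t),
      (forall u : T, requiv (raw u) rid -> val (phi u) = ppid d),
      (forall s t u : T, Sigma (Fpmn F n) s -> Sigma (Fpmn F n) t ->
          Sigma (Fpmn F n) u -> requiv (raw u) (rcomp (raw s) (raw t)) ->
          ppdist (val (phi u)) (ppmul (val (phi s)) (val (phi t))) < delta) &
      (forall s : T, Sigma (Fpmn F n) s ->
          `|pptr (val (phi s)) - rtau (raw s)| < delta)].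

Definition NSA (F : seq T) (n : nat) (delta : R) (d : nat) : nat :=
  #|[set g : (size F).-tuple (pperm d) |
      `[< exists phi : T -> pperm d, SA F n delta phi /\ tval g = map phi F >] ]|.

Definition sa_term (F : seq T) (n : nat) (delta : R) (d : nat) : \bar R :=
  if NSA F n delta d == 0%N then -oo%E
  else (ln (NSA F n delta d)%:R / (d%:R * ln d%:R))%:E.

Definition sofic_s (F : seq T) : \bar R :=
  ereal_inf [set x | exists n delta, 0 < delta /\
     x = limn_esup (sa_term F n delta)].

Definition cost (F : seq T) : R := \sum_(s <- F) fine (mu (pdom s)).

End Defs.

From Pilot Require Import Defs.
From HB Require Import structures.
From mathcomp Require Import all_boot all_order all_algebra.
From mathcomp Require Import all_classical all_reals all_analysis.
From mathcomp Require Import ring lra.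
Set Implicit Arguments. Unset Strict Implicit. Unset Printing Implicit Defensive.
Import Order.TTheory GRing.Theory Num.Theory.

(** For [s] in [F], the element [e = s^-1 s] is the identity of [dom s]; both
  [s] and [e] lie in [Sigma F_pm^2].  A sofic approximation [phi] makes [phi e]
  almost idempotent with trace about [mu (dom s)], so its domain has about
  [d mu (dom s)] points; since [phi s] is almost [phi s * phi e], the domain of
  [phi s] has at most [d (mu (dom s) + 3 delta)] points.  There are at most
  [2^d d^m] partial permutations of [{1..d}] with at most [m] points in their
  domain, hence [NSA <= 2^(dk) d^(d (cost F + 3 k delta))], and dividing its
  logarithm by [d ln d] gives [cost F + 3 k delta + k ln 2 / ln d]. *)

Section PartialMapCounting.
Variables T U : finType.

Definition ppdom (p : {ffun T -> option U}) : {set T} := [set i | p i != None].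

Lemma card_ppdom_eq (A : {set T}) :
  #|[pred p : {ffun T -> option U} | ppdom p == A]| <= #|U| ^ #|A|.
Proof.
have -> : #|U| = #|[pred o : option U | o != None]|.
  by rewrite cardC1 card_option.
rewrite -(card_pffun_on None); apply: subset_leq_card; apply/fintype.subsetP => p.
rewrite inE => /eqP <-; apply/pffun_onP; split.
  by apply/fintype.subsetP => i; rewrite !inE.
by move=> _ /fintype.imageP[i + ->]; rewrite !inE.
Qed.

Lemma card_ppdom_le m : 0 < #|U| ->
  #|[set p : {ffun T -> option U} | #|ppdom p| <= m]| <= 2 ^ #|T| * #|U| ^ m.
Proof.
move=> U0; rewrite -sum1_card (partition_big ppdom predT) //=.
rewrite -(cardsT T) -card_powerset powersetT cardsT -sum_nat_const.
apply: leq_sum => A _; rewrite sum1_card.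
have [Am|mA] := leqP #|A| m.
  apply: leq_trans (leq_trans (card_ppdom_eq A) (leq_pexp2l U0 Am)).
  by apply: subset_leq_card; apply/fintype.subsetP => p; rewrite !inE => /andP[].
rewrite (@eq_card0 _ _ _) // => p; rewrite unfold_in inE.
by apply/negbTE/andP => -[pm /eqP pA]; move: pm; rewrite pA leqNgt mA.
Qed.

End PartialMapCounting.

Lemma card_tuple_family (T : finType) k (S : 'I_k -> pred T) :
  #|[set g : k.-tuple T | [forall i, tnth g i \in S i]]| <= \prod_(i < k) #|S i|.
Proof.
have -> : \prod_(i < k) #|S i| = #|family S|.
  by rewrite card_family foldrE big_map big_enum.
have inj : injective (fun g : k.-tuple T => [ffun i => tnth g i]).
  by move=> g1 g2 /ffunP h; apply: eq_from_tnth => i; have := h i; rewrite !ffunE.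
rewrite -(card_imset _ inj); apply: subset_leq_card; apply/fintype.subsetP => f.
case/imsetP=> g; rewrite inE => /forallP hg ->; apply/familyP => i.
by rewrite ffunE; exact: hg.
Qed.

Lemma card_pperm_dom_le d m : 0 < d ->
  #|[pred q : pperm d | #|ppdom (val q)| <= m]| <= 2 ^ d * d ^ m.
Proof.
move=> d0; have := @card_ppdom_le 'I_d 'I_d m; rewrite !card_ord => /(_ d0).
apply: leq_trans.
rewrite -(card_imset _ val_inj); apply: subset_leq_card.
by apply/fintype.subsetP => _ /imsetP[q + ->]; rewrite unfold_in inE.
Qed.

Section PartialPermutationDomain.
Variable d : nat.
Implicit Types p e : {ffun 'I_d -> option 'I_d}.

(* Injectivity forces a point moved by [p] to satisfy [p (p i) <> p i]. *)
Lemma card_ppdom_le_fix_idem p : ppinj p ->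
  #|ppdom p| <= #|[set i | p i == Some i]| + #|[set i | p i != ppmul p p i]|.
Proof.
move=> /forallP injp; apply: leq_trans (leq_card_setU _ _).
apply: subset_leq_card; apply/fintype.subsetP => i; rewrite !inE /ppmul ffunE.
case pi: (p i) => [j|] //= _; have [->|ji] := eqVneq j i; first by rewrite eqxx.
apply/orP; right; apply/negP => /eqP pj.
by have := forallP (injp i) j; rewrite pi -pj eqxx /= => /eqP ij; rewrite ij eqxx in ji.
Qed.

Lemma card_ppdom_le_comp p e :
  #|ppdom p| <= #|ppdom e| + #|[set i | p i != ppmul p e i]|.
Proof.
apply: leq_trans (leq_card_setU _ _).
apply: subset_leq_card; apply/fintype.subsetP => i; rewrite !inE /ppmul ffunE.
by case: (e i).
Qed.

Lemma card_set_classic (P : pred 'I_d) :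
  #|[set i | P i]%classic| = #|[set i | P i]%SET|.
Proof. by apply: eq_card => i; rewrite inE; apply/idP/idP => [/set_mem|/mem_set]. Qed.

Lemma ppdom_le_tr_dist (R : realType) p e : ppinj e -> 0 < d ->
  ((#|ppdom p|%:R / d%:R : R) <=
    pptr e + ppdist e (ppmul e e) + ppdist p (ppmul p e))%R.
Proof.
move=> inje d0; rewrite /pptr /ppdist -!mulrDl ler_pM2r ?invr_gt0 ?ltr0n //.
rewrite -!natrD ler_nat !card_set_classic.
exact: leq_trans (card_ppdom_le_comp p e) (leq_add (card_ppdom_le_fix_idem inje) (leqnn _)).
Qed.

End PartialPermutationDomain.

Lemma limn_esup_le (R : realType) (u : (\bar R)^nat) (c : \bar R) N :
  (forall n, (N <= n)%N -> (u n <= c)%E) -> (limn_esup u <= c)%E.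
Proof.
move=> uc; rewrite limn_esup_lim (cvg_lim _ (@cvg_esups_inf R u)) //.
apply: le_trans; first by apply: ereal_inf_lbound; exists N.
by apply: ge_ereal_sup => _ [n /= Nn <-]; exact: uc.
Qed.

Lemma inseq_nth (A : Type) (x0 : A) (F : seq A) i :
  (i < size F)%N -> inseq (nth x0 F i) F.
Proof. by elim: F i => [|a F IH] [|i] //= h; [left|right; apply: IH]. Qed.

Local Open Scope classical_set_scope.
Local Open Scope ring_scope.

Section FullPseudogroup.
Context {dX : measure_display} {X : measurableType dX} {R : realType}.
Variables (mu : {measure set X -> \bar R}) (Rel : X -> X -> Prop).
Hypothesis Rel_refl : forall x, Rel x x.
Hypothesis Rel_sym : forall x y, Rel x y -> Rel y x.
Local Notation T := (pfb mu Rel).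

Lemma pdom_measurable (s : T) : measurable (pdom s).
Proof. by case: (pfb_bij s) => [[]]. Qed.

Lemma borel_pbij_id (D : set X) : measurable D -> borel_pbij D id id.
Proof. by move=> mD; split; rewrite ?image_id //; exact: measurable_id. Qed.

Lemma meas_pres_id (D : set X) : meas_pres mu D id.
Proof. by move=> C _ _; rewrite image_id. Qed.

Definition pfb_idon (D : set X) (mD : measurable D) : T :=
  PFB (borel_pbij_id mD) (@meas_pres_id D) (fun x _ => Rel_refl x).

Definition pfb_one : T := pfb_idon (@measurableT _ X).

Definition pfb_src (s : T) : T := pfb_idon (pdom_measurable s).

Lemma borel_pbij_inv (D : set X) (f g : X -> X) :
  borel_pbij D f g -> borel_pbij (f @` D) g f.
Proof.
case=> [[mD mf] mfD mg gf fg]; have gfD : g @` (f @` D) = D.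
  apply/seteqP; split => [_ [_ [z Dz <-] <-]|x Dx]; first by rewrite gf.
  by exists (f x); [exists x|rewrite gf].
by split; rewrite ?gfD.
Qed.

Lemma meas_pres_inv (s : T) : meas_pres mu (pfun s @` pdom s) (Defs.pinv s).
Proof.
case: s => D f g b mp _ /= C mC CD; have [[mD mf] _ _ gf fg] := b.
have gC : g @` C = D `&` f @^-1` C.
  apply/seteqP; split => [_ [y Cy <-]|x [Dx Cfx]].
    have [z Dz fz] := CD y Cy.
    by rewrite -fz gf //; split => //=; rewrite fz.
  by exists (f x); rewrite ?gf.
have mgC : measurable (g @` C) by rewrite gC; exact: mf.
rewrite -(mp _ mgC) ?gC; last by move=> x [].
congr (mu _); rewrite -gC; apply/seteqP; split => [_ [_ [y Cy <-] <-]|y Cy].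
  by rewrite fg //; exact: CD.
by exists (g y); [exists y|rewrite fg //; exact: CD].
Qed.

Lemma Rel_pinv (s : T) y : (pfun s @` pdom s) y -> Rel y (Defs.pinv s y).
Proof.
case: s => D f g b _ gr /= [x Dx <-]; have [_ _ _ gf _] := b.
by rewrite gf //; apply: Rel_sym; exact: gr.
Qed.

Definition pfb_inv (s : T) : T :=
  PFB (borel_pbij_inv (pfb_bij s)) (@meas_pres_inv s) (@Rel_pinv s).

Lemma requiv_ext (a b : set X * (X -> X)) : (forall x, a.1 x <-> b.1 x) ->
  (forall x, a.1 x -> a.2 x = b.2 x) -> requiv mu a b.
Proof.
move=> e1 e2; rewrite /requiv; suff -> : diffset a b = set0 by rewrite measure0.
apply/seteqP; split => // x [ab []].
have ax : a.1 x by case: ab => // /e1.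
by split => //; split; [apply/e1|apply: e2].
Qed.

Lemma requiv_refl (s : T) : requiv mu (raw s) (raw s).
Proof. exact: requiv_ext. Qed.

Lemma requiv_sum1 (s : T) : requiv mu (raw s) (rsum [:: raw s]).
Proof.
apply: requiv_ext => x /=; first by split => [|[|[]]]; [left|].
by move=> sx; rewrite asboolT.
Qed.

Lemma requiv_src_idem (s : T) :
  requiv mu (raw (pfb_src s)) (rcomp (raw (pfb_src s)) (raw (pfb_src s))).
Proof. by apply: requiv_ext => x /=; split => // -[]. Qed.

Lemma requiv_mul_src (s : T) : requiv mu (raw s) (rcomp (raw s) (raw (pfb_src s))).
Proof. by apply: requiv_ext => x /=; split => // -[]. Qed.

Lemma rtau_src (s : T) : rtau mu (raw (pfb_src s)) = fine (mu (pdom s)).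
Proof. by congr (fine (mu _)); apply/seteqP; split => x //= []. Qed.

Lemma Fpm_mem F (s : T) : inseq s F -> Fpm F s.
Proof. by move=> sF; right; exists s => //; left; exact: requiv_refl. Qed.

Lemma Fpmn2_mem F (s : T) : inseq s F -> Fpmn F 2 s.
Proof.
move=> sF; exists [:: s; pfb_one]; split => //.
  move=> t /= [->|[->|[]]]; first exact: Fpm_mem.
  by left; exact: requiv_ext.
by apply: requiv_ext => x /=; split => // -[[]].
Qed.

Lemma Fpmn2_src F (s : T) : inseq s F -> Fpmn F 2 (pfb_src s).
Proof.
move=> sF; exists [:: pfb_inv s; s]; split => //.
  move=> t /= [->|[->|[]]]; last exact: Fpm_mem.
  by right; exists s => //; right; exact: requiv_ext.
have [_ _ _ gf _] := pfb_bij s.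
apply: requiv_ext => x /=; last by move=> sx; rewrite gf.
by split => [sx|[[]]] //; split => //; exists x.
Qed.

Lemma Sigma_of (A : T -> Prop) (u : T) : A u -> Sigma A u.
Proof.
move=> Au; exists [:: u]; split; [by move=> t /= [->|[]] | done | exact: requiv_sum1].
Qed.

Lemma SA_ppdom_lt F (delta : R) d (phi : T -> pperm d) (s : T) :
  SA F 2 delta phi -> inseq s F -> (0 < d)%N ->
  #|ppdom (val (phi s))|%:R < (fine (mu (pdom s)) + 3 * delta) * d%:R.
Proof.
move=> [_ _ phi_mul phi_tr] sF d0.
have Se := Sigma_of (Fpmn2_src sF); have Ss := Sigma_of (Fpmn2_mem sF).
have e_idem := phi_mul _ _ _ Se Se Se (requiv_src_idem s).
have s_e := phi_mul _ _ _ Ss Se Ss (requiv_mul_src s).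
have := phi_tr _ Se; rewrite rtau_src ltr_distl => /andP[_ e_tr].
have := ppdom_le_tr_dist R (val (phi s)) (valP (phi (pfb_src s))) d0.
by rewrite -ltr_pdivrMr ?ltr0n //; lra.
Qed.

Lemma NSA_le_prod F (delta : R) d (x0 : T) : (0 < d)%N -> 0 < delta ->
  (NSA F 2 delta d <= \prod_(i < size F)
     (2 ^ d * d ^ Num.truncn ((fine (mu (pdom (nth x0 F i))) + 3 * delta) * d%:R)))%N.
Proof.
move=> d0 delta0.
set M := fun i : 'I_(size F) =>
  Num.truncn ((fine (mu (pdom (nth x0 F i))) + 3 * delta) * d%:R).
pose S i := [pred q : pperm d | (#|ppdom (val q)| <= M i)%N].
apply: leq_trans (leq_trans (card_tuple_family S)
  (leq_prod (fun i _ => card_pperm_dom_le (M i) d0))).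
apply: subset_leq_card; apply/fintype.subsetP => g /set_mem/asboolP [phi [phiSA gphi]].
rewrite inE; apply/forallP => i; rewrite unfold_in /=.
rewrite (tnth_nth (phi x0)) gphi (nth_map x0) // truncn_ge_nat; last first.
  by rewrite mulr_ge0 // addr_ge0 ?fine_ge0 // mulr_ge0 // ltW.
by apply/ltW/(SA_ppdom_lt phiSA) => //; exact: inseq_nth.
Qed.

End FullPseudogroup.

Section SoficEntropyBound.
Context {dX : measure_display} {X : measurableType dX} {R : realType}.
Variables (mu : {measure set X -> \bar R}) (Rel : X -> X -> Prop).
Hypothesis Rel_refl : forall x, Rel x x.
Hypothesis Rel_sym : forall x y, Rel x y -> Rel y x.
Variable F : seq (pfb mu Rel).
Local Notation k := (size F).

Lemma ln_NSA_le (delta : R) d : (0 < d)%N -> 0 < delta -> (0 < NSA F 2 delta d)%N ->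
  ln (NSA F 2 delta d)%:R <=
    (d * k)%:R * ln 2 + (cost F + 3 * k%:R * delta) * d%:R * ln d%:R.
Proof.
move=> d0 delta0 NSA0; set x0 := pfb_one mu Rel_refl.
set M := fun i : 'I_k =>
  Num.truncn ((fine (mu (pdom (nth x0 F i))) + 3 * delta) * d%:R).
have NSA_le : (NSA F 2 delta d <= 2 ^ (d * k) * d ^ (\sum_(i < k) M i))%N.
  apply: leq_trans (NSA_le_prod Rel_refl Rel_sym F x0 d0 delta0) _.
  by rewrite big_split /= prod_nat_const card_ord -expnM expn_sum.
have sumM_le : (\sum_(i < k) M i)%:R <= (cost F + 3 * k%:R * delta) * d%:R.
  rewrite natr_sum /cost (big_nth x0) big_mkord.
  apply: le_trans (_ : \sum_(i < k) (fine (mu (pdom (nth x0 F i))) + 3 * delta)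
                         * d%:R <= _); last first.
    by rewrite -mulr_suml big_split /= sumr_const card_ord -[_ *+ k]mulr_natr mulrAC.
  apply: ler_sum => i _; rewrite truncn_le.
  by rewrite mulr_ge0 // addr_ge0 ?fine_ge0 // mulr_ge0 // ltW.
have ln_d0 : 0 <= ln (d%:R : R) by rewrite ln_ge0 // ler1n.
apply: le_trans (_ : ln (2 ^+ (d * k) * d%:R ^+ (\sum_(i < k) M i)) <= _).
  rewrite ler_ln ?posrE ?ltr0n ?mulr_gt0 ?exprn_gt0 ?ltr0n //.
  by move: NSA_le; rewrite -(ler_nat R) natrM natrX (natrX _ d).
rewrite lnM ?posrE ?exprn_gt0 ?ltr0n // !lnXn ?ltr0n //.
rewrite -[ln 2 *+ _]mulr_natl -[ln d%:R *+ _]mulr_natl lerD2l.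
by rewrite ler_wpM2r.
Qed.

Lemma sa_term_le (delta : R) d : (1 < d)%N -> 0 < delta ->
  (sa_term F 2 delta d <= (cost F + 3 * k%:R * delta + k%:R * ln 2 / ln d%:R)%:E)%E.
Proof.
move=> d1 delta0; rewrite /sa_term; case: ifPn => [_|NSA0]; first by rewrite leNye.
have d0 : (0 < d)%N by apply: ltnW.
have lnd0 : 0 < ln (d%:R : R) by rewrite ln_gt0 // ltr1n.
rewrite lee_fin ler_pdivrMr ?mulr_gt0 ?ltr0n //.
apply: le_trans (ln_NSA_le d0 delta0 _) _; first by rewrite lt0n.
suff -> : (cost F + 3 * k%:R * delta + k%:R * ln 2 / ln d%:R) * (d%:R * ln d%:R) =
  (d * k)%:R * ln 2 + (cost F + 3 * k%:R * delta) * d%:R * ln d%:R by [].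
by rewrite natrM; field; rewrite gt_eqF.
Qed.

End SoficEntropyBound.

Lemma ln_natr_ge_truncn (R : realType) (K : R) d :
  (Num.truncn (expR K) < d)%N -> K <= ln d%:R.
Proof.
move=> Kd; have d0 : (0 < d)%N by apply: leq_ltn_trans Kd.
rewrite -[K]expRK ler_ln ?posrE ?expR_gt0 ?ltr0n //.
by apply/ltW/(lt_le_trans (truncnS_gt _)); rewrite ler_nat.
Qed.

Unset Implicit Arguments.

Theorem mainTheorem11 (dX : measure_display) (X : measurableType dX)
  (R : realType) (mu : probability X R) (Rel : X -> X -> Prop)
  (hstd : @standard_borel dX X R) (hR : cber Rel) (hpmp : pmp mu Rel)
  (F : seq (pfb mu Rel))
  (hF : pairwise_noneq mu (map (@raw _ _ _ mu Rel) F)) :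
  (sofic_s F <= (cost F)%:E)%E.
Proof.
have [Rel_refl Rel_sym _ _ _] := hR.
apply/lee_addgt0Pr => eps eps0; set k := size F.
have k0 : (0 : R) <= k%:R by [].
pose delta := eps / (6 * (k%:R + 1)).
have delta0 : 0 < delta by rewrite divr_gt0 // mulr_gt0 // ltr_wpDl.
have delta_small : 3 * k%:R * delta <= eps / 2.
  by rewrite /delta mulrA ler_pdivrMr ?mulr_gt0 ?ltr_wpDl //; nra.
pose K := 2 * k%:R * ln 2 / eps.
apply: le_trans; first by apply: ereal_inf_lbound; exists 2%N, delta.
apply: (@limn_esup_le _ _ _ (Num.truncn (expR K)).+2) => d hd.
have d1 : (1 < d)%N by apply: leq_trans hd.
apply: le_trans (sa_term_le Rel_refl Rel_sym F d1 delta0) _; rewrite lee_fin.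
have lnd0 : 0 < ln (d%:R : R) by rewrite ln_gt0 // ltr1n.
have : K <= ln d%:R by apply: ln_natr_ge_truncn; apply: ltnW.
rewrite /K ler_pdivrMr // => lnK.
have : k%:R * ln 2 / ln d%:R <= eps / 2 by rewrite ler_pdivrMr //; lra.
lra.
Qed.
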